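(* Let $|\Psi^{\mathrm h}_0\rangle$ and $|\Psi^{\mathrm c}_0\rangle$ be two initial states with $p^{\mathrm h}_0(0)>0$ and $p^{\mathrm c}_0(0)>0$, and suppose $|\Psi^{\mathrm h}_0\rangle$ is hotter than $|\Psi^{\mathrm c}_0\rangle$ with respect to $D_f$, i.e. $D_f^{\mathrm h}(0)>D_f^{\mathrm c}(0)$. Let $i\in\{1,\dots,n-1\}$ be the smallest index such that $\frac{p^{\mathrm h}_i(0)}{p^{\mathrm h}_0(0)}\neq\frac{p^{\mathrm c}_i(0)}{p^{\mathrm c}_0(0)}$ (such an index exists under the hypotheses). Then the Mpemba effect occurs for this pair (with respect to $D_f$) if and only if $$\frac{p^{\mathrm h}_i(0)}{p^{\mathrm h}_0(0)}<\frac{p^{\mathrm c}_i(0)}{p^{\mathrm c}_0(0)}.$$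
   Context: Let $H$ be a Hamiltonian on an $n$-dimensional Hilbert space with nondegenerate eigenvalues $0=E_0<E_1<\dots<E_{n-1}$ and orthonormal eigenvectors $|E_0\rangle,\dots,|E_{n-1}\rangle$. For a pure initial state $|\Psi_0\rangle$ and real $\tau$, quantum imaginary-time evolution (QITE) is $|\Psi(\tau)\rangle=e^{-H\tau}|\Psi_0\rangle/\sqrt{\langle\Psi_0|e^{-2H\tau}|\Psi_0\rangle}$. The populations are $p_i(\tau)=|\langle E_i|\Psi(\tau)\rangle|^2$, so that $p_i(\tau)=p_i(0)e^{-2E_i\tau}/\sum_{j=0}^{n-1}p_j(0)e^{-2E_j\tau}$. Fix a nondecreasing function $f:\mathbb R\to\mathbb R$ with $f(E_1)>f(E_0)=0$, and define the distance to the ground state $D_f(\tau)=\sum_{i=0}^{n-1}p_i(\tau)f(E_i)$. Superscripts $\mathrm h$ and $\mathrm c$ denote quantities for the QITE trajectories starting from $|\Psi^{\mathrm h}_0\rangle$ and $|\Psi^{\mathrm c}_0\rangle$ respectively. Given $D_f^{\mathrm h}(0)>D_f^{\mathrm c}(0)$, the Mpemba effect occurs if there exists $\tau^\star>0$ such that $D_f^{\mathrm h}(\tau)<D_f^{\mathrm c}(\tau)$ for all $\tau>\tau^\star$. *)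

From mathcomp Require Import all_boot all_algebra.
From mathcomp Require Import complex.
From mathcomp Require Import all_classical all_reals all_analysis.
Set Implicit Arguments. Unset Strict Implicit. Unset Printing Implicit Defensive.
Import GRing.Theory Num.Theory.
Local Open Scope ring_scope.
Local Open Scope complex_scope.

(* The Hilbert space C^n is written in the orthonormal eigenbasis
   |E_0>, ..., |E_{n-1}> of H: a vector is given by its coordinates
   psi i = <E_i|psi> for i < n (values at i >= n are irrelevant). *)

Definition abs2 {R : realType} (z : R[i]) : R := (complex.Re z) ^+ 2 + (complex.Im z) ^+ 2.

Definition sqnorm {R : realType} (n : nat) (psi : nat -> R[i]) : R :=
  \sum_(j < n) abs2 (psi j).

Definition is_state {R : realType} (n : nat) (psi : nat -> R[i]) : Prop :=
  sqnorm n psi = 1.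

(* e^{-H tau} |psi>, in eigenbasis coordinates *)
Definition evol {R : realType} (E : nat -> R) (tau : R) (psi : nat -> R[i])
  : nat -> R[i] := fun i => (expR (- (E i * tau)))%:C * psi i.

(* QITE state |Psi(tau)> = e^{-H tau}|Psi_0> / sqrt(<Psi_0|e^{-2H tau}|Psi_0>) *)
Definition qite {R : realType} (n : nat) (E : nat -> R) (psi : nat -> R[i])
  (tau : R) : nat -> R[i] :=
  fun i => (Num.sqrt (\sum_(j < n) expR (- (2 * E j * tau)) * abs2 (psi j)))^-1%:C
           * evol E tau psi i.

Definition pop {R : realType} (n : nat) (E : nat -> R) (psi : nat -> R[i])
  (tau : R) (i : nat) : R := abs2 (qite n E psi tau i).

Definition Dist {R : realType} (n : nat) (E : nat -> R) (f : R -> R)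
  (psi : nat -> R[i]) (tau : R) : R :=
  \sum_(i < n) pop n E psi tau i * f (E i).

Definition mpemba {R : realType} (n : nat) (E : nat -> R) (f : R -> R)
  (psih psic : nat -> R[i]) : Prop :=
  exists tstar : R, 0 < tstar /\
    forall tau : R, tstar < tau -> Dist n E f psih tau < Dist n E f psic tau.

(* For either trajectory D_f(tau) = A(tau) / S(tau), where A = sum_j w_j f(E_j),
   S = sum_j w_j and w_j = e^{-2 E_j tau} |<E_j|Psi_0>|^2.  Hence the hot state is
   closer to the ground state at time tau iff
     A^h S^c - A^c S^h = sum_{j,k} w^h_j w^c_k (f(E_j) - f(E_k)) < 0.
   Rescaled by e^{2 E_i tau}, the pairs with j, k < i cancel by antisymmetry,
   because there the two initial populations a_j, b_j are proportional; every
   other pair decays except (i,0) and (0,i).  The rescaled difference thus tends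
   to (f(E_i) - f(E_0)) (a_i b_0 - a_0 b_i), whose sign decides the effect. *)
From mathcomp Require Import all_boot all_algebra.
From mathcomp Require Import complex.
From mathcomp Require Import all_classical all_reals all_analysis.
From mathcomp Require Import ring lra.
Import order.Order.TTheory GRing.Theory Num.Theory numFieldNormedType.Exports.
Local Open Scope ring_scope.
Local Open Scope classical_set_scope.

Section WeightedMeans.
Context {R : numFieldType} {I : finType}.

Lemma sum_antisym_pairs (P : pred (I * I)) (F : I * I -> R) :
  (forall p, P (p.2, p.1) = P p) -> (forall p, P p -> F (p.2, p.1) = - F p) ->
  \sum_(p | P p) F p = 0.
Proof.
move=> Psym Fanti; set S := \sum_(p | _) _.
have swapK : involutive (fun p : I * I => (p.2, p.1)) by case.
have SN : S = - S.
  rewrite {1}/S (reindex_inj (inv_inj swapK)) /S -sumrN /=.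
  by apply: eq_big => p; rewrite Psym // => /Fanti.
have : S + S == 0 by rewrite {2}SN subrr.
by rewrite -mulr2n mulrn_eq0 => /eqP.
Qed.

Lemma sum_pred2 (x y : I) (F : I -> R) :
  x != y -> \sum_(p | (p == x) || (p == y)) F p = F x + F y.
Proof.
move=> xy; rewrite (bigD1 x) ?eqxx //= (big_pred1 y) // => p /=.
by rewrite andb_orl andbN /=; case: eqP => // ->; rewrite eq_sym.
Qed.

Lemma ltr_div_cross (x y u v : R) : 0 < x -> 0 < y -> (u / x < v / y) = (u * y < v * x).
Proof. by move=> x0 y0; rewrite ltr_pdivrMr // mulrAC ltr_pdivlMr. Qed.

Lemma sum_cross_pairs (w v g : I -> R) :
  \sum_(p : I * I) w p.1 * v p.2 * (g p.1 - g p.2)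
  = (\sum_j w j * g j) * (\sum_k v k) - (\sum_k v k * g k) * (\sum_j w j).
Proof.
rewrite -(pair_bigA _ (fun j k => w j * v k * (g j - g k))).
rewrite [X in _ - X]mulrC !mulr_suml -sumrB; apply: eq_bigr => j _.
by rewrite !mulr_sumr -sumrB; apply: eq_bigr => k _; ring.
Qed.

Lemma ltr_weighted_means (w v g : I -> R) :
  0 < \sum_j w j -> 0 < \sum_j v j ->
  ((\sum_j w j * g j) / (\sum_j w j) < (\sum_j v j * g j) / (\sum_j v j))
  = (\sum_(p : I * I) w p.1 * v p.2 * (g p.1 - g p.2) < 0).
Proof. by move=> w0 v0; rewrite sum_cross_pairs subr_lt0 ltr_div_cross. Qed.

End WeightedMeans.

Section ExponentialSums.
Context {R : realType}.

Lemma expR_scale_cvg0 (d : R) : 0 < d -> expR (- (d * t)) @[t --> +oo] --> 0.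
Proof.
move=> d0; apply: (cvg_comp _ _ _ (@cvgr_expR R)).
apply/cvgryPgt => A; near=> t; rewrite -ltr_pdivrMl //.
near: t; apply: nbhs_pinfty_gt; exact: num_real.
Unshelve. all: by end_near.
Qed.

Lemma exp_sum_cvg (I : finType) (P : pred I) (c d : I -> R) :
  (forall p, P p -> 0 <= d p) ->
  \sum_(p | P p) c p * expR (- (d p * t)) @[t --> +oo]
    --> \sum_(p | P p && (d p == 0)) c p.
Proof.
move=> d_ge0; rewrite big_mkcondr.
apply: cvg_big => [|p /d_ge0]; first exact: add_continuous.
rewrite le_eqVlt => /predU1P[<-|d0].
  rewrite eqxx; under eq_cvg do rewrite mul0r oppr0 expR0 mulr1.
  exact: cvg_cst.
rewrite gt_eqF // -[0](mulr0 (c p)).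
apply: cvgMl_tmp; exact: expR_scale_cvg0.
Qed.

Lemma eventually_lt0_iff (u : R -> R) (L : R) :
  u t @[t --> +oo] --> L -> L != 0 ->
  (exists T, 0 < T /\ forall t, T < t -> u t < 0) <-> L < 0.
Proof.
move=> uL L0; split=> [[T [T0 uT]]|Lneg].
- have [//|Lpos|L_eq0] := ltgtP L 0; last by rewrite L_eq0 eqxx in L0.
  have [M [_ uM]] := cvgr_gt L uL 0 Lpos.
  pose t := `|M| + T + 1.
  have [Mt Tt] : M < t /\ T < t.
    by have := ler_norm M; have := normr_ge0 M; rewrite /t; lra.
  by have := uM t Mt; have := uT t Tt; lra.
- have [M [_ uM]] := cvgr_lt L uL 0 Lneg.
  exists (`|M| + 1); split=> [|t Mt]; first by have := normr_ge0 M; lra.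
  by apply: uM; have := ler_norm M; lra.
Qed.

End ExponentialSums.

Section Populations.
Context {R : realType} (n : nat) (E : nat -> R).
Local Open Scope complex_scope.

Lemma abs2_ge0 (z : R[i]) : 0 <= abs2 z.
Proof. by rewrite /abs2 addr_ge0 // sqr_ge0. Qed.

Lemma abs2_scale (x : R) (z : R[i]) : abs2 (x%:C * z) = x ^+ 2 * abs2 z.
Proof. by case: z => u v; rewrite /abs2 /=; ring. Qed.

Definition weight (psi : nat -> R[i]) (t : R) (j : nat) : R :=
  expR (- (2 * E j * t)) * abs2 (psi j).

Lemma weight0 psi j : weight psi 0 j = abs2 (psi j).
Proof. by rewrite /weight mulr0 oppr0 expR0 mul1r. Qed.

Lemma sum_weight_ge0 psi t : 0 <= \sum_(k < n) weight psi t k.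
Proof. by apply: sumr_ge0 => k _; rewrite mulr_ge0 ?abs2_ge0 ?expR_ge0. Qed.

Lemma sum_weight_gt0 psi t :
  (0 < n)%N -> 0 < abs2 (psi 0%N) -> 0 < \sum_(k < n) weight psi t k.
Proof.
move=> n0 a0; rewrite (bigD1 (Ordinal n0)) //= ltr_wpDr ?mulr_gt0 ?expR_gt0 //.
by apply: sumr_ge0 => k _; rewrite mulr_ge0 ?abs2_ge0 ?expR_ge0.
Qed.

Lemma pop_weight psi t j :
  pop n E psi t j = weight psi t j / \sum_(k < n) weight psi t k.
Proof.
rewrite /pop /qite /evol !abs2_scale exprVn sqr_sqrtr; last exact: sum_weight_ge0.
by rewrite /weight -expRM_natl mulrN (mulrA 2) mulrC.
Qed.

Lemma Dist_weight f psi t :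
  Dist n E f psi t
  = (\sum_(j < n) weight psi t j * f (E j)) / \sum_(j < n) weight psi t j.
Proof. by rewrite /Dist mulr_suml; apply: eq_bigr => j _; rewrite pop_weight mulrAC. Qed.

Lemma abs2_0_gt0 psi : 0 < pop n E psi 0 0%N -> 0 < abs2 (psi 0%N).
Proof.
move=> p0; rewrite lt0r abs2_ge0 andbT; apply: contraTneq p0 => a0.
by rewrite pop_weight weight0 a0 mul0r ltxx.
Qed.

Lemma pop0_ratio psi j : 0 < pop n E psi 0 0%N ->
  pop n E psi 0 j / pop n E psi 0 0%N = abs2 (psi j) / abs2 (psi 0%N).
Proof.
move=> p0; have S0 : \sum_(k < n) weight psi 0 k != 0.
  by apply: contraTneq p0 => S0; rewrite pop_weight S0 invr0 mulr0 ltxx.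
by rewrite !pop_weight !weight0 invf_div mulrA divfK.
Qed.

End Populations.

Section Crossing.
Context {R : realType} (n : nat) (E : nat -> R) (f : R -> R).

Definition crossing_coef (a b : nat -> R) (p : 'I_n * 'I_n) : R :=
  a p.1 * b p.2 * (f (E p.1) - f (E p.2)).

Definition crossing_exp (e : R) (p : 'I_n * 'I_n) : R :=
  2 * E p.1 + 2 * E p.2 - e.

(* [e^{e t} (A^h S^c - A^c S^h)] at time [t], where [D_f = A / S] and [a], [b]
   are the initial populations of the two trajectories. *)
Definition crossing (a b : nat -> R) (e t : R) : R :=
  \sum_(p : 'I_n * 'I_n) crossing_coef a b p * expR (- (crossing_exp e p * t)).

Lemma Dist_lt_crossing (psih psic : nat -> R[i]) e t :
  (0 < n)%N -> 0 < abs2 (psih 0%N) -> 0 < abs2 (psic 0%N) ->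
  (Dist n E f psih t < Dist n E f psic t)
  = (crossing (fun j => abs2 (psih j)) (fun j => abs2 (psic j)) e t < 0).
Proof.
move=> n0 a0 b0; rewrite !Dist_weight.
rewrite (ltr_weighted_means (fun j : 'I_n => weight E psih t j)
  (fun j : 'I_n => weight E psic t j) (fun j : 'I_n => f (E j))) ?sum_weight_gt0 //.
rewrite -(pmulr_rlt0 _ (expR_gt0 (e * t))) mulr_sumr /crossing.
congr (_ < 0); apply: eq_bigr => p _; rewrite /weight /crossing_coef /crossing_exp.
have -> : - ((2 * E p.1 + 2 * E p.2 - e) * t)
          = e * t + (- (2 * E p.1 * t) + - (2 * E p.2 * t)) by ring.
by rewrite !expRD; ring.
Qed.

Lemma mpemba_crossing (psih psic : nat -> R[i]) e :
  (0 < n)%N -> 0 < abs2 (psih 0%N) -> 0 < abs2 (psic 0%N) ->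
  mpemba n E f psih psic <-> exists T, 0 < T /\ forall t, T < t ->
    crossing (fun j => abs2 (psih j)) (fun j => abs2 (psic j)) e t < 0.
Proof.
move=> n0 a0 b0.
by split=> -[T [T0 HT]]; exists T; split=> // t /HT; rewrite (Dist_lt_crossing _ _ e).
Qed.

Hypotheses (E0 : E 0%N = 0)
  (E_incr : forall j k, (j < k)%N -> (k < n)%N -> E j < E k).

Lemma E_le j k : (j <= k)%N -> (k < n)%N -> E j <= E k.
Proof. by rewrite leq_eqVlt => /predU1P[-> //|jk] kn; exact/ltW/E_incr. Qed.

Lemma E_ge0 j : (j < n)%N -> 0 <= E j.
Proof. by rewrite -E0; apply: E_le. Qed.

Lemma E_eq j k : (j < n)%N -> (k < n)%N -> (E j == E k) = (j == k).
Proof.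
move=> jn kn; case: ltngtP => [jk|kj|->]; last by rewrite eqxx.
- by rewrite lt_eqF // E_incr.
- by rewrite gt_eqF // E_incr.
Qed.

Variable i : nat.
Hypotheses (i_gt0 : (0 < i)%N) (i_lt : (i < n)%N).

Lemma pair_excess_high j k : (i <= j)%N -> (j < n)%N -> (k < n)%N ->
  0 <= 2 * E j + 2 * E k - 2 * E i
  /\ (2 * E j + 2 * E k - 2 * E i == 0) = (j == i) && (k == 0%N).
Proof.
move=> ij jn kn.
have Eij : 0 <= E j - E i by rewrite subr_ge0 E_le.
have Ek : 0 <= E k by apply: E_ge0.
have -> : 2 * E j + 2 * E k - 2 * E i = 2 * (E j - E i) + 2 * E k by ring.
split; first by rewrite addr_ge0 ?mulr_ge0.
rewrite paddr_eq0 ?mulr_ge0 // !mulf_eq0 pnatr_eq0 /= subr_eq0 -E0.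
by rewrite !E_eq // (leq_ltn_trans (leq0n k) kn).
Qed.

Lemma crossing_exp_high (j k : 'I_n) : ~~ ((j < i)%N && (k < i)%N) ->
  0 <= crossing_exp (2 * E i) (j, k)
  /\ (crossing_exp (2 * E i) (j, k) == 0)
     = (j == i :> nat) && (k == 0%N :> nat) || (j == 0%N :> nat) && (k == i :> nat).
Proof.
rewrite /crossing_exp negb_and -!leqNgt /=; case/orP => [ij|ik].
- have [-> ->] := pair_excess_high _ _ ij (ltn_ord j) (ltn_ord k); split=> //.
  have /negbTE -> : j != 0%N :> nat by rewrite -lt0n (leq_trans i_gt0 ij).
  by rewrite orbF.
- rewrite (addrC (2 * E j)).
  have [-> ->] := pair_excess_high _ _ ik (ltn_ord k) (ltn_ord j); split=> //.
  have /negbTE -> : k != 0%N :> nat by rewrite -lt0n (leq_trans i_gt0 ik).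
  by rewrite andbF andbC.
Qed.

Lemma crossing_exp_eq0 (j k : 'I_n) :
  ~~ ((j < i)%N && (k < i)%N) && (crossing_exp (2 * E i) (j, k) == 0)
  = (j == i :> nat) && (k == 0%N :> nat) || (j == 0%N :> nat) && (k == i :> nat).
Proof.
case: (boolP ((j < i)%N && (k < i)%N)) => [/andP[ji ki]|high] /=.
- by rewrite (ltn_eqF ji) (ltn_eqF ki) !andbF.
- exact: (crossing_exp_high _ _ high).2.
Qed.

Variables a b : nat -> R.
Hypotheses (ab0 : a 0%N * b 0%N != 0)
  (a_prop_b : forall j, (j < i)%N -> a j * b 0%N = a 0%N * b j).

Lemma cross_prod_sym j k : (j < i)%N -> (k < i)%N -> a k * b j = a j * b k.
Proof.
move=> ji ki; apply: (mulIf ab0).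
transitivity ((a k * b 0%N) * (a 0%N * b j)); first by ring.
by rewrite (a_prop_b _ ki) -(a_prop_b _ ji); ring.
Qed.

Lemma crossing_low_eq0 (t : R) :
  \sum_(p : 'I_n * 'I_n | (p.1 < i)%N && (p.2 < i)%N)
     crossing_coef a b p * expR (- (crossing_exp (2 * E i) p * t)) = 0.
Proof.
apply: sum_antisym_pairs => [[j k]|[j k] /andP[/= ji ki]]; first exact: andbC.
by rewrite /crossing_coef /crossing_exp /= (cross_prod_sym _ _ ji ki) (addrC (2 * E k)); ring.
Qed.

Lemma crossing_cvg : crossing a b (2 * E i) t @[t --> +oo]
  --> (f (E i) - f (E 0%N)) * (a i * b 0%N - a 0%N * b i).
Proof.
pose low (p : 'I_n * 'I_n) := (p.1 < i)%N && (p.2 < i)%N.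
have n0 : (0 < n)%N := ltn_trans i_gt0 i_lt.
pose oi := Ordinal i_lt; pose o0 := Ordinal n0.
have -> : crossing a b (2 * E i) = fun t =>
    \sum_(p | ~~ low p) crossing_coef a b p * expR (- (crossing_exp (2 * E i) p * t)).
  by apply/funext => t; rewrite /crossing (bigID low) /= crossing_low_eq0 add0r.
have -> : (f (E i) - f (E 0%N)) * (a i * b 0%N - a 0%N * b i)
  = \sum_(p | ~~ low p && (crossing_exp (2 * E i) p == 0)) crossing_coef a b p.
  rewrite (eq_bigl (fun p => (p == (oi, o0)) || (p == (o0, oi)))) => [|[j k]].
    rewrite sum_pred2 /crossing_coef /=; first by ring.
    by rewrite xpair_eqE -val_eqE /= gtn_eqF.
  by rewrite xpair_eqE -!val_eqE /= crossing_exp_eq0.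
by apply: exp_sum_cvg => -[j k] /crossing_exp_high[].
Qed.

End Crossing.

Theorem theorem1 (R : realType) (n : nat) (E : nat -> R) (f : R -> R)
  (psih psic : nat -> R[i])
  (Hn : (2 <= n)%N)
  (HE0 : E 0%N = 0)
  (HEinc : forall j k : nat, (j < k)%N -> (k < n)%N -> E j < E k)
  (Hfmono : forall x y : R, x <= y -> f x <= f y)
  (Hf0 : f (E 0%N) = 0)
  (Hf1 : f (E 0%N) < f (E 1%N))
  (Hh : is_state n psih) (Hc : is_state n psic)
  (Hh0 : 0 < pop n E psih 0 0%N) (Hc0 : 0 < pop n E psic 0 0%N)
  (Hhot : Dist n E f psic 0 < Dist n E f psih 0)
  (i : nat) (Hi1 : (1 <= i)%N) (Hin : (i < n)%N)
  (Hneq : pop n E psih 0 i / pop n E psih 0 0%N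
          <> pop n E psic 0 i / pop n E psic 0 0%N)
  (Hmin : forall j : nat, (1 <= j)%N -> (j < i)%N ->
          pop n E psih 0 j / pop n E psih 0 0%N
          = pop n E psic 0 j / pop n E psic 0 0%N) :
  mpemba n E f psih psic <->
  pop n E psih 0 i / pop n E psih 0 0%N < pop n E psic 0 i / pop n E psic 0 0%N.
Proof.
have n0 : (0 < n)%N := ltn_trans Hi1 Hin.
have /abs2_0_gt0 a0 := Hh0; have /abs2_0_gt0 b0 := Hc0.
rewrite !pop0_ratio // in Hneq *.
have ab0 : abs2 (psih 0%N) * abs2 (psic 0%N) != 0 by rewrite mulf_neq0 ?lt0r_neq0.
have prop j : (j < i)%N ->
    abs2 (psih j) * abs2 (psic 0%N) = abs2 (psih 0%N) * abs2 (psic j).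
  case: j => [//|j ji].
  apply/eqP; rewrite [X in _ == X]mulrC -eqr_div ?lt0r_neq0 //.
  by rewrite -(pop0_ratio n E psih) // -(pop0_ratio n E psic) // Hmin.
have gap : 0 < f (E i) - f (E 0%N).
  by rewrite subr_gt0 (lt_le_trans Hf1) // Hfmono // (E_le _ _ HEinc).
have L0 : (f (E i) - f (E 0%N))
    * (abs2 (psih i) * abs2 (psic 0%N) - abs2 (psih 0%N) * abs2 (psic i)) != 0.
  apply: mulf_neq0; first exact: lt0r_neq0.
  rewrite subr_eq0 [X in _ == X]mulrC -eqr_div ?lt0r_neq0 //.
  exact/eqP.
have lim := crossing_cvg n E f HE0 HEinc i Hi1 Hin
  (fun j => abs2 (psih j)) (fun j => abs2 (psic j)) ab0 prop.
apply: iff_trans (mpemba_crossing n E f psih psic (2 * E i) n0 a0 b0) _.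
apply: iff_trans (eventually_lt0_iff _ _ lim L0) _.
by rewrite pmulr_rlt0 // subr_lt0 ltr_div_cross // [X in _ < X]mulrC.
Qed.
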